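(* If the triples $(p,q,r)$ and $(p',q',r')$ are dual to each other in the extended strange duality, then the matrix $A_{p,q,r}$ is conjugate in $SL(2;\mathbb Z)$ to the inverse $A_{p',q',r'}^{-1}$.
   Context: For positive integers $p,q,r$ let $A_{p,q,r}=\begin{pmatrix}r-1&-1\\1&0\end{pmatrix}\begin{pmatrix}q-1&-1\\1&0\end{pmatrix}\begin{pmatrix}p-1&-1\\1&0\end{pmatrix}$ (the monodromy of the link of the cusp singularity $x^p+y^q+z^r+axyz$, a $T^2$-bundle over the circle). The extended strange duality pairs of triples are: the self-dual triples $(2,3,7)$, $(2,4,6)$, $(3,3,6)$, $(2,5,5)$, $(3,4,5)$, $(4,4,4)$, and the pairs $(2,3,8)\leftrightarrow(2,4,5)$, $(2,3,9)\leftrightarrow(3,3,4)$, $(2,4,7)\leftrightarrow(3,3,5)$, $(2,5,6)\leftrightarrow(3,4,4)$. *)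

From mathcomp Require Import all_boot all_order all_algebra.
Set Implicit Arguments. Unset Strict Implicit. Unset Printing Implicit Defensive.
Import GRing.Theory Num.Theory.
Local Open Scope ring_scope.

Definition cusp_factor (n : nat) : 'M[int]_2 :=
  \matrix_(i < 2, j < 2)
    if i == 0 :> nat then (if j == 0 :> nat then n%:Z - 1 else -1)
    else (if j == 0 :> nat then 1 else 0).

Definition A_mat (p q r : nat) : 'M[int]_2 :=
  cusp_factor r *m cusp_factor q *m cusp_factor p.

Definition SL2Z_conj (A B : 'M[int]_2) : Prop :=
  exists P : 'M[int]_2, \det P = 1 /\ P *m A *m invmx P = B.

Definition strange_dual_list : seq ((nat * nat * nat) * (nat * nat * nat)) :=
  [:: ((2,3,7),(2,3,7)); ((2,4,6),(2,4,6)); ((3,3,6),(3,3,6));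
      ((2,5,5),(2,5,5)); ((3,4,5),(3,4,5)); ((4,4,4),(4,4,4));
      ((2,3,8),(2,4,5)); ((2,4,5),(2,3,8));
      ((2,3,9),(3,3,4)); ((3,3,4),(2,3,9));
      ((2,4,7),(3,3,5)); ((3,3,5),(2,4,7));
      ((2,5,6),(3,4,4)); ((3,4,4),(2,5,6)) ]%N.

Definition strange_dual (p q r p' q' r' : nat) : Prop :=
  ((p, q, r), (p', q', r')) \in strange_dual_list.

(** A conjugator P with P A P^-1 = B^-1 is the same as a P with B P A = P, a
    division-free identity that is checked for the concrete triples by
    multiplying closed-form 2x2 matrices.  The identity is symmetric under
    (A, B, P) |-> (B, A, P^-1), so one conjugator per dual pair suffices. *)

From mathcomp Require Import all_boot all_order all_algebra.
From mathcomp Require Import ring.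
Local Open Scope ring_scope.
Import GRing.Theory.

Definition mx2 {R : Type} (a b c d : R) : 'M[R]_2 :=
  \matrix_(i < 2, j < 2)
    if i == 0 :> nat then (if j == 0 :> nat then a else b)
    else (if j == 0 :> nat then c else d).

Lemma mulmx2 (R : pzRingType) (a b c d a' b' c' d' : R) :
  mx2 a b c d *m mx2 a' b' c' d' =
  mx2 (a * a' + b * c') (a * b' + b * d') (c * a' + d * c') (c * b' + d * d').
Proof.
apply/matrixP => i j; rewrite !mxE !big_ord_recl big_ord0 !mxE addr0.
by case: i => [[|[|//]] ?]; case: j => [[|[|//]] ?].
Qed.

Lemma det_mx2 (R : comPzRingType) (a b c d : R) :
  \det (mx2 a b c d) = a * d - b * c.
Proof.
rewrite (expand_det_row _ ord0) !big_ord_recl big_ord0 /cofactor !det_mx11 !mxE /=.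
by rewrite expr0 expr1 mul1r mulN1r addr0 mulrN.
Qed.

Section TwistedCommutation.
Variables (R : comUnitRingType) (n : nat).
Implicit Types A B P : 'M[R]_n.

Lemma twisted_conj_invmx A B P :
  P \in unitmx -> B \in unitmx -> B *m P *m A = P -> P *m A *m invmx P = invmx B.
Proof.
move=> uP uB BPA.
have PA : P *m A = invmx B *m P by rewrite -{2}BPA -!mulmxA mulKmx.
by rewrite PA mulmxK.
Qed.

Lemma twisted_invmx A B P :
  P \in unitmx -> B *m P *m A = P -> A *m invmx P *m B = invmx P.
Proof.
move=> uP BPA.
have : A *m (invmx P *m B *m P) = 1%:M.
  by apply: mulmx1C; rewrite -!mulmxA (mulmxA B) BPA mulVmx.
by rewrite !mulmxA => /(congr1 (mulmx^~ (invmx P))); rewrite mulmxK // mul1mx.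
Qed.

End TwistedCommutation.

Lemma SL2Z_conj_invmx_twisted (P A B : 'M[int]_2) :
  \det P = 1 -> B *m P *m A = P -> SL2Z_conj A (invmx B).
Proof.
move=> detP BPA; have uP : P \in unitmx by rewrite unitmxE detP unitr1.
have uB : B \in unitmx.
  rewrite unitmxE; apply/unitrPr; exists (\det A).
  by rewrite -detP -BPA !det_mulmx detP mulr1.
by exists P; split; last exact: twisted_conj_invmx.
Qed.

Lemma SL2Z_conj_invmx_sym (A B : 'M[int]_2) :
  A \in unitmx -> B \in unitmx -> SL2Z_conj A (invmx B) -> SL2Z_conj B (invmx A).
Proof.
move=> uA uB [P [detP PAP]]; have uP : P \in unitmx by rewrite unitmxE detP unitr1.
have BPA : B *m P *m A = P.
  by rewrite -[P in RHS](mulKVmx uB) -PAP !mulmxA mulmxKV.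
apply: (SL2Z_conj_invmx_twisted (invmx P)); first by rewrite det_inv detP invr1.
exact: twisted_invmx.
Qed.

Lemma cusp_factorE n : cusp_factor n = mx2 (n%:Z - 1) (-1) 1 0.
Proof. by []. Qed.

Lemma det_cusp_factor n : \det (cusp_factor n) = 1.
Proof. by rewrite cusp_factorE det_mx2 mulr0 mulN1r opprK add0r. Qed.

Lemma A_matE p q r :
  let x := p%:Z - 1 in let y := q%:Z - 1 in let z := r%:Z - 1 in
  A_mat p q r = mx2 (x * y * z - x - z) (1 - y * z) (x * y - 1) (- y).
Proof. by rewrite /A_mat !cusp_factorE !mulmx2; congr mx2; ring. Qed.

Lemma unitmx_A_mat p q r : A_mat p q r \in unitmx.
Proof. by rewrite unitmxE /A_mat !det_mulmx !det_cusp_factor !mulr1 unitr1. Qed.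

Theorem proposition4p1 (p q r p' q' r' : nat) :
  strange_dual p q r p' q' r' ->
  SL2Z_conj (A_mat p q r) (invmx (A_mat p' q' r')).
Proof.
have dual_sym p1 q1 r1 p2 q2 r2 :
    SL2Z_conj (A_mat p1 q1 r1) (invmx (A_mat p2 q2 r2)) ->
    SL2Z_conj (A_mat p2 q2 r2) (invmx (A_mat p1 q1 r1)).
  exact/SL2Z_conj_invmx_sym/unitmx_A_mat/unitmx_A_mat.
have conj_by a b c d p1 q1 r1 p2 q2 r2 : a * d - b * c = 1 ->
    A_mat p2 q2 r2 *m mx2 a b c d *m A_mat p1 q1 r1 = mx2 a b c d ->
    SL2Z_conj (A_mat p1 q1 r1) (invmx (A_mat p2 q2 r2)).
  by rewrite -det_mx2; apply: SL2Z_conj_invmx_twisted.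
move=> dual; do ![case/predU1P: dual => [[-> -> -> -> -> ->]|dual]] => //.
- by apply: (conj_by (-3) 10 (-1) 3); rewrite ?A_matE ?mulmx2.
- by apply: (conj_by (-2) 5 (-1) 2); rewrite ?A_matE ?mulmx2.
- by apply: (conj_by (-1) 2 (-1) 1); rewrite ?A_matE ?mulmx2.
- by apply: (conj_by (-2) 5 (-1) 2); rewrite ?A_matE ?mulmx2.
- by apply: (conj_by (-1) 2 (-1) 1); rewrite ?A_matE ?mulmx2.
- by apply: (conj_by (-1) 1 (-2) 1); rewrite ?A_matE ?mulmx2.
- by apply: (conj_by (-2) 7 (-1) 3); rewrite ?A_matE ?mulmx2.
- by apply/dual_sym/(conj_by (-2) 7 (-1) 3); rewrite ?A_matE ?mulmx2.
- by apply: (conj_by (-1) 4 (-1) 3); rewrite ?A_matE ?mulmx2.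
- by apply/dual_sym/(conj_by (-1) 4 (-1) 3); rewrite ?A_matE ?mulmx2.
- by apply: (conj_by (-1) 3 (-1) 2); rewrite ?A_matE ?mulmx2.
- by apply/dual_sym/(conj_by (-1) 3 (-1) 2); rewrite ?A_matE ?mulmx2.
- by apply: (conj_by (-1) 3 (-1) 2); rewrite ?A_matE ?mulmx2.
- by apply/dual_sym/(conj_by (-1) 3 (-1) 2); rewrite ?A_matE ?mulmx2.
Qed.
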